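(* Let $G$ be a group. Call a finite subset $A\subseteq G$ \emph{strongly independent} if no subgroup of $G$ containing $A$ can be generated by fewer than $|A|$ elements. Then: (i) every subset of a finite strongly independent subset of $G$ is strongly independent, so the finite strongly independent subsets form a simplicial complex (the \emph{strong independence complex} of $G$); (ii) for $g\in G$, $\{g\}$ is strongly independent if and only if $g\neq 1$, so the vertices of this complex are exactly the non-identity elements of $G$; (iii) the $1$-skeleton of the strong independence complex is the complement of the enhanced power graph of $G$; that is, for distinct non-identity $x,y\in G$, the set $\{x,y\}$ is strongly independent if and only if $\langle x,y\rangle$ is not cyclic.
   Context: A simplicial complex on a set $X$ is a downward-closed collection of finite subsets (simplices) of $X$; its $1$-skeleton is the graph formed by the simplices of cardinality at most $2$. The enhanced power graph of $G$ is the graph on $G$ in which $x$ and $y$ are adjacent if and only if $\langle x,y\rangle$ is a cyclic group. *)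

From Stdlib Require Import List Arith.
Import ListNotations.

Record Group (T : Type) : Type := {
  gmul : T -> T -> T;
  gone : T;
  ginv : T -> T;
  gmulA : forall x y z, gmul x (gmul y z) = gmul (gmul x y) z;
  gmul1l : forall x, gmul gone x = x;
  gmulVl : forall x, gmul (ginv x) x = gone
}.
Arguments gmul {T} g _ _.
Arguments gone {T} g.
Arguments ginv {T} g _.

Section GroupDefs.
Variables (T : Type) (G : Group T).

Definition is_subgroup (H : T -> Prop) : Prop :=
  H (gone G) /\ (forall x y, H x -> H y -> H (gmul G x y)) /\
  (forall x, H x -> H (ginv G x)).

Definition gen (S : T -> Prop) : T -> Prop :=
  fun x => forall H, is_subgroup H -> (forall y, S y -> H y) -> H x.

Definition generated_by (H : T -> Prop) (l : list T) : Prop :=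
  forall x, H x <-> gen (fun y => In y l) x.

(* Finite subsets of G are duplicate-free lists; |A| = length A.
   A is strongly independent if no subgroup containing A can be generated
   by fewer than |A| elements. *)
Definition strongly_independent (A : list T) : Prop :=
  NoDup A /\
  forall H, is_subgroup H -> (forall a, In a A -> H a) ->
    ~ (exists l : list T, length l < length A /\ generated_by H l).

Definition cyclic_subgroup (H : T -> Prop) : Prop :=
  exists g, generated_by H [g].

Definition enhanced_power_adj (x y : T) : Prop :=
  cyclic_subgroup (gen (fun z => In z [x; y])).

End GroupDefs.
Arguments is_subgroup {T} G H.
Arguments gen {T} G S _.
Arguments generated_by {T} G H l.
Arguments strongly_independent {T} G A.
Arguments cyclic_subgroup {T} G H.
Arguments enhanced_power_adj {T} G x y.

(* A is strongly independent iff it has no repetitions and every list whose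
   generated subgroup contains A has length at least |A|.  For (i), a short
   list generating a subgroup containing B, extended by the elements of A
   outside B, would be a short list generating a subgroup containing A.  For
   (ii) and (iii), a list of length 0 generates the trivial group, and a list
   of length 1 a cyclic group; two powers g^a, g^b always generate a cyclic
   group, namely the one generated by g^gcd(a,b), by Bezout. *)
From Stdlib Require Import List Arith.
From Stdlib Require Import ZArith Lia ClassicalEpsilon.
Import ListNotations.

Lemma incl_NoDup_complement (A : Type) (l s : list A) :
  NoDup s -> incl s l ->
  exists c, incl l (s ++ c) /\ length s + length c <= length l.
Proof.
  intros s_uniq sl.
  set (in_s a := if excluded_middle_informative (In a s) then true else false).
  exists (filter (fun a => negb (in_s a)) l); split.
  - intros a al; apply in_or_app; unfold in_s.
    destruct (excluded_middle_informative (In a s)) as [as_|nas]; [now left|].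
    right; apply filter_In; split; [exact al|].
    now destruct (excluded_middle_informative (In a s)).
  - rewrite <- (filter_length in_s l); apply Nat.add_le_mono_r.
    apply NoDup_incl_length; [exact s_uniq|].
    intros a as_; apply filter_In; split; [now apply sl|]; unfold in_s.
    now destruct (excluded_middle_informative (In a s)).
Qed.

Section GroupTheory.
Variables (T : Type) (G : Group T).
Local Notation "x * y" := (gmul G x y).
Local Notation one := (gone G).
Local Notation "x ^-1" := (ginv G x) (at level 2).
Local Notation "<< l >>" := (gen G (fun y => In y l)).

Lemma mulgV x : x * x^-1 = one.
Proof.
  rewrite <- (gmul1l _ G (x * x^-1)), <- (gmulVl _ G x^-1) at 1.
  rewrite <- (gmulA _ G), (gmulA _ G x^-1 x), (gmulVl _ G), (gmul1l _ G).
  apply (gmulVl _ G).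
Qed.

Lemma mulg1 x : x * one = x.
Proof. now rewrite <- (gmulVl _ G x), (gmulA _ G), mulgV, (gmul1l _ G). Qed.

Lemma invg_unique x y : y * x = one -> x^-1 = y.
Proof.
  intros yx; rewrite <- (mulg1 y), <- (mulgV x), (gmulA _ G), yx.
  now rewrite (gmul1l _ G).
Qed.

Lemma invg1 : one^-1 = one.
Proof. apply invg_unique, (gmul1l _ G). Qed.

Lemma gen_subgroup (S : T -> Prop) : is_subgroup G (gen G S).
Proof.
  split; [|split].
  - now intros H [H1 _] _.
  - intros x y Sx Sy H HH SH; pose proof HH as [_ [HM _]].
    now apply HM; [apply Sx|apply Sy].
  - intros x Sx H HH SH; pose proof HH as [_ [_ HV]].
    now apply HV, Sx.
Qed.

Lemma gen_in (S : T -> Prop) x : S x -> gen G S x.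
Proof. intros Sx H _ SH; auto. Qed.

Lemma gen_min (S H : T -> Prop) :
  is_subgroup G H -> (forall y, S y -> H y) -> forall x, gen G S x -> H x.
Proof. intros HH SH x Sx; now apply Sx. Qed.

Lemma gen_nil x : << [] >> x -> x = one.
Proof.
  apply (gen_min _ (fun x => x = one)); [|intros y []].
  split; [reflexivity|split].
  - intros x' y -> ->; apply (gmul1l _ G).
  - intros x' ->; apply invg1.
Qed.

Lemma gen_app_l (l l' : list T) x : << l >> x -> << l ++ l' >> x.
Proof.
  apply gen_min; [apply gen_subgroup|].
  now intros y yl; apply gen_in, in_or_app; left.
Qed.

Lemma generated_by_gen (l : list T) : generated_by G << l >> l.
Proof. now intros x. Qed.

Fixpoint npow (g : T) (n : nat) : T :=
  match n with O => one | S k => npow g k * g end.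

Definition zpow (g : T) (z : Z) : T :=
  if Z.leb 0 z then npow g (Z.to_nat z) else npow g^-1 (Z.to_nat (- z)).

Lemma zpow0 g : zpow g 0 = one.
Proof. reflexivity. Qed.

Lemma zpow1 g : zpow g 1 = g.
Proof. apply (gmul1l _ G). Qed.

Lemma zpowS g z : zpow g (Z.succ z) = zpow g z * g.
Proof.
  unfold zpow; destruct (Z.leb_spec 0 z).
  - destruct (Z.leb_spec 0 (Z.succ z)); [|lia].
    now replace (Z.to_nat (Z.succ z)) with (S (Z.to_nat z)) by lia.
  - replace (Z.to_nat (- z)) with (S (Z.to_nat (- Z.succ z))) by lia; simpl.
    rewrite <- (gmulA _ G), (gmulVl _ G), mulg1.
    destruct (Z.leb_spec 0 (Z.succ z)); [|reflexivity].
    now replace (Z.succ z) with 0%Z by lia.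
Qed.

Lemma zpowP g z : zpow g (Z.pred z) = zpow g z * g^-1.
Proof.
  rewrite <- (Z.succ_pred z) at 2.
  now rewrite zpowS, <- (gmulA _ G), mulgV, mulg1.
Qed.

Lemma zpowD g m n : zpow g (m + n) = zpow g m * zpow g n.
Proof.
  induction n using Z.peano_ind.
  - now rewrite Z.add_0_r, zpow0, mulg1.
  - now rewrite Z.add_succ_r, !zpowS, IHn, (gmulA _ G).
  - now rewrite Z.add_pred_r, !zpowP, IHn, (gmulA _ G).
Qed.

Lemma zpowN g n : (zpow g n)^-1 = zpow g (- n).
Proof. now apply invg_unique; rewrite <- zpowD, Z.add_opp_diag_l. Qed.

Lemma zpowM g m n : zpow (zpow g m) n = zpow g (m * n).
Proof.
  induction n using Z.peano_ind.
  - now rewrite Z.mul_0_r.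
  - now rewrite zpowS, IHn, Z.mul_succ_r, zpowD.
  - now rewrite zpowP, IHn, Z.mul_pred_r, zpowN, <- zpowD.
Qed.

Lemma subgroup_zpow (H : T -> Prop) g :
  is_subgroup G H -> H g -> forall n, H (zpow g n).
Proof.
  intros [H1 [HM HV]] Hg n; induction n using Z.peano_ind.
  - exact H1.
  - rewrite zpowS; auto.
  - rewrite zpowP; auto.
Qed.

Lemma gen1P g x : << [g] >> x <-> exists n, x = zpow g n.
Proof.
  split.
  - intros gx; apply (gen_min (fun y => In y [g]) (fun x => exists n, x = zpow g n)); [| |exact gx].
    + split; [now exists 0%Z|split].
      * intros a b [m ->] [n ->]; exists (m + n)%Z; now rewrite zpowD.
      * intros a [m ->]; exists (- m)%Z; apply zpowN.
    + intros y [<-|[]]; exists 1%Z; now rewrite zpow1.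
  - intros [n ->]; apply subgroup_zpow; [apply gen_subgroup|now apply gen_in; left].
Qed.

Lemma gen_zpow2_cyclic g a b :
  cyclic_subgroup G << [zpow g a; zpow g b] >>.
Proof.
  set (d := Z.gcd a b).
  destruct (Z.gcd_bezout a b d eq_refl) as [u [v bezout]].
  destruct (Z.gcd_divide_l a b) as [a' Ea], (Z.gcd_divide_r a b) as [b' Eb].
  exists (zpow g d); intros x; split.
  - apply gen_min; [apply gen_subgroup|].
    intros y [<-|[<-|[]]]; apply gen1P.
    + exists a'; rewrite zpowM; f_equal; fold d in Ea; lia.
    + exists b'; rewrite zpowM; f_equal; fold d in Eb; lia.
  - apply gen_min; [apply gen_subgroup|]; intros y [<-|[]].
    rewrite <- bezout, zpowD, (Z.mul_comm u), (Z.mul_comm v), <- !zpowM.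
    apply (proj1 (proj2 (gen_subgroup _)));
      apply (subgroup_zpow _ _ (gen_subgroup _)), gen_in; simpl; auto.
Qed.

Lemma gen2_cyclic g x y :
  << [g] >> x -> << [g] >> y -> cyclic_subgroup G << [x; y] >>.
Proof.
  intros [a ->]%gen1P [b ->]%gen1P; apply gen_zpow2_cyclic.
Qed.

Lemma strongly_independentP (A : list T) :
  strongly_independent G A <->
  NoDup A /\ forall l, (forall a, In a A -> << l >> a) -> length A <= length l.
Proof.
  split; intros [A_uniq A_indep]; split; auto.
  - intros l Al; apply Nat.nlt_ge; intros short.
    apply (A_indep _ (gen_subgroup _) Al).
    now exists l; split; [|apply generated_by_gen].
  - intros H _ AH [l [short Hl]].
    enough (length A <= length l) by lia.
    now apply A_indep; intros a aA; apply Hl, AH.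
Qed.

Lemma strongly_independent_incl (A B : list T) :
  strongly_independent G A -> NoDup B -> incl B A -> strongly_independent G B.
Proof.
  intros [_ A_indep]%strongly_independentP B_uniq BA.
  apply strongly_independentP; split; [exact B_uniq|]; intros l Bl.
  destruct (incl_NoDup_complement _ _ _ B_uniq BA) as [C [ABC lenC]].
  enough (length A <= length (l ++ C)) by (rewrite length_app in *; lia).
  apply A_indep; intros a aA.
  destruct (in_app_or _ _ _ (ABC a aA)) as [aB|aC].
  - now apply gen_app_l, Bl.
  - now apply gen_in, in_or_app; right.
Qed.

Lemma strongly_independent1 g : strongly_independent G [g] <-> g <> one.
Proof.
  rewrite strongly_independentP; split.
  - intros [_ g_indep] ->.
    enough (1 <= 0) by lia.
    apply (g_indep []); intros a [<-|[]]; apply gen_subgroup.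
  - intros g1; split; [constructor; [intros []|constructor]|].
    intros [|h l] gl; simpl; [|lia].
    now destruct g1; apply gen_nil, gl; left.
Qed.

Lemma strongly_independent2 x y :
  x <> one -> x <> y ->
  strongly_independent G [x; y] <-> ~ enhanced_power_adj G x y.
Proof.
  intros x1 xy; rewrite strongly_independentP; split.
  - intros [_ xy_indep] [g gen_xy].
    enough (2 <= 1) by lia.
    now apply (xy_indep [g]); intros a axy; apply (proj1 (gen_xy a)), gen_in.
  - intros not_adj; split.
    { constructor; [intros [yx|[]]; auto|constructor; [intros []|constructor]]. }
    intros [|g [|h l]] xyl; simpl; [| |lia].
    + now destruct x1; apply gen_nil, xyl; left.
    + now destruct not_adj; apply (gen2_cyclic g); apply xyl; simpl; auto.
Qed.

End GroupTheory.

Theorem mainTheorem2 (T : Type) (G : Group T) :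
  (* (i) downward closure: subsets of strongly independent sets *)
  (forall A B : list T, strongly_independent G A -> NoDup B ->
     (forall b, In b B -> In b A) -> strongly_independent G B)
  (* (ii) vertices are exactly the non-identity elements *)
  /\ (forall g : T, strongly_independent G [g] <-> g <> gone G)
  (* (iii) 1-skeleton = complement of the enhanced power graph *)
  /\ (forall x y : T, x <> gone G -> y <> gone G -> x <> y ->
       (strongly_independent G [x; y] <-> ~ enhanced_power_adj G x y)).
Proof.
  split; [|split].
  - apply strongly_independent_incl.
  - apply strongly_independent1.
  - intros x y x1 _; apply strongly_independent2, x1.
Qed.
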